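(* Let $n > 1$. The class of $\mathrm{FP}_n$-flat left $R$-modules is closed under extensions, under direct limits, under direct products, and under pure submodules and pure quotients (i.e. if $0 \to N \to M \to M/N \to 0$ is a pure exact sequence with $M$ $\mathrm{FP}_n$-flat, then $N$ and $M/N$ are $\mathrm{FP}_n$-flat).
   Context: $R$ is an associative ring with unit. For $n \ge 0$, a (left or right) $R$-module is finitely $n$-presented if there is an exact sequence $F_n \to \cdots \to F_0 \to M \to 0$ with every $F_i$ finitely generated free; $\mathrm{FP}_n$ is the class of such modules. A left $R$-module $M$ is $\mathrm{FP}_n$-flat if $\mathrm{Tor}_1^R(F,M)=0$ for every right $R$-module $F\in\mathrm{FP}_n$. *)

From HB Require Import structures.
From mathcomp Require Import all_boot all_order all_algebra.
Set Implicit Arguments. Unset Strict Implicit. Unset Printing Implicit Defensive.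
Import GRing.Theory.
Local Open Scope ring_scope.

(* Right R-modules are left modules over the converse ring R^c:
   the right action  x . r  is written  (r : R^c) *: x. *)
Notation rmodType R := (lmodType (GRing.converse R)).

Section Defs.
Variable R : pzRingType.

(* A right module F in FP_n is given (up to isomorphism, F = coker d 0) by an
   exact complex of finitely generated free right modules
     R^(k n) --d(n-1)--> ... --d 1--> R^(k 1) --d 0--> R^(k 0)  (--> F --> 0),
   where R^(k i) are column vectors and d i : R^(k i.+1) -> R^(k i) is left
   multiplication by a (k i) x (k i.+1) matrix (a right-linear map).                       *)
Definition fp_resolution (n : nat) (k : nat -> nat)
    (d : forall i, 'M[R]_(k i, k i.+1)) : Prop :=
  forall i, (i.+1 < n)%N ->
    d i *m d i.+1 = 0 /\
    forall v : 'cV[R]_(k i.+1), d i *m v = 0 ->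
      exists w : 'cV[R]_(k i.+2), d i.+1 *m w = v.

(* Tor_1^R(F, M) = 0, computed from the (start of the) free resolution above:
   tensoring with M gives  M^(k 2) -> M^(k 1) -> M^(k 0), (x_l) |-> (sum_l a_jl x_l),
   and Tor_1 is its homology at M^(k 1).                                     *)
Definition Tor1_vanishes (k : nat -> nat) (d : forall i, 'M[R]_(k i, k i.+1))
    (M : lmodType R) : Prop :=
  forall x : 'I_(k 1) -> M,
    (forall j : 'I_(k 0), \sum_(l < k 1) d 0 j l *: x l = 0) ->
    exists y : 'I_(k 2) -> M,
      forall l : 'I_(k 1), x l = \sum_(m < k 2) d 1 l m *: y m.

Definition FPn_flat (n : nat) (M : lmodType R) : Prop :=
  forall (k : nat -> nat) (d : forall i, 'M[R]_(k i, k i.+1)),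
    fp_resolution n d -> Tor1_vanishes d M.

Definition short_exact (A B C : lmodType R) (f : A -> B) (g : B -> C) : Prop :=
  [/\ injective f, (forall c, exists b, g b = c) &
      (forall b, g b = 0 <-> exists a, f a = b)].

Definition balanced (F : rmodType R) (N : lmodType R) (T : zmodType)
    (b : F -> N -> T) : Prop :=
  [/\ (forall x1 x2 y, b (x1 + x2) y = b x1 y + b x2 y),
      (forall x y1 y2, b x (y1 + y2) = b x y1 + b x y2) &
      (forall x (r : R) y, b ((r : GRing.converse R) *: x) y = b x (r *: y))].

Definition is_tensor (F : rmodType R) (N : lmodType R) (T : zmodType)
    (b : F -> N -> T) : Prop :=
  balanced b /\
  forall (T' : zmodType) (b' : F -> N -> T'), balanced b' ->
    exists u : {additive T -> T'},
      (forall x y, u (b x y) = b' x y) /\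
      forall v : {additive T -> T'}, (forall x y, v (b x y) = b' x y) ->
        forall t, v t = u t.

Definition pure_map (N M : lmodType R) (f : N -> M) : Prop :=
  forall (F : rmodType R) (T1 T2 : zmodType) (b1 : F -> N -> T1) (b2 : F -> M -> T2),
    is_tensor b1 -> is_tensor b2 ->
    forall u : {additive T1 -> T2}, (forall x y, u (b1 x y) = b2 x (f y)) ->
      injective u.

Definition direct_system (I : Type) (le : I -> I -> Prop) (Mi : I -> lmodType R)
    (f : forall i j, {linear Mi i -> Mi j}) : Prop :=
  [/\ (forall i, le i i), (forall i j l, le i j -> le j l -> le i l),
      inhabited I, (forall i j, exists l, le i l /\ le j l) &
      (forall i x, f i i x = x)] /\
      (forall i j l x, le i j -> le j l -> f j l (f i j x) = f i l x).

Definition cocone (I : Type) (le : I -> I -> Prop) (Mi : I -> lmodType R)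
    (f : forall i j, {linear Mi i -> Mi j}) (N : lmodType R)
    (h : forall i, {linear Mi i -> N}) : Prop :=
  forall i j x, le i j -> h j (f i j x) = h i x.

Definition is_direct_limit (I : Type) (le : I -> I -> Prop) (Mi : I -> lmodType R)
    (f : forall i j, {linear Mi i -> Mi j}) (M : lmodType R)
    (g : forall i, {linear Mi i -> M}) : Prop :=
  cocone le f g /\
  forall (N : lmodType R) (h : forall i, {linear Mi i -> N}), cocone le f h ->
    exists u : {linear M -> N},
      (forall i x, u (g i x) = h i x) /\
      forall v : {linear M -> N}, (forall i x, v (g i x) = h i x) ->
        forall y, v y = u y.

Definition is_product (I : Type) (Mi : I -> lmodType R) (P : lmodType R)
    (p : forall i, {linear P -> Mi i}) : Prop :=
  forall (N : lmodType R) (h : forall i, {linear N -> Mi i}),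
    exists u : {linear N -> P},
      (forall i x, p i (u x) = h i x) /\
      forall v : {linear N -> P}, (forall i x, p i (v x) = h i x) ->
        forall y, v y = u y.

End Defs.

From HB Require Import structures.
From mathcomp Require Import all_boot all_order all_algebra.
From mathcomp Require Import boolp.
Set Implicit Arguments. Unset Strict Implicit. Unset Printing Implicit Defensive.
Import GRing.Theory.
Local Open Scope ring_scope.

(* Each closure property is proved one presentation at a time: for fixed matrices
   d 0, d 1, the vanishing of Tor_1 says that every solution x in M of d 0 x = 0 has
   the form x = d 1 y.  Extensions follow by a diagram chase, which needs
   d 0 * d 1 = 0 and hence n > 1.  Directed limits and products are handled through
   their elementwise descriptions (every element of a limit comes from some M_i and,
   if it vanishes in the limit, already vanishes further along; an element of a
   product is determined by its components), which we extract from the universal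
   properties by testing them against suitable quotient modules.  For a pure
   monomorphism f : N -> M, tensoring with the right module presented by a matrix A
   shows that if f z = A w for some w in M, then z = A w' for some w' in N; this
   moves solutions from M down to N and, after correcting a lift, to the quotient. *)

Definition additive_of (U V : zmodType) (f : U -> V) (fA : zmod_morphism f)
  : {additive U -> V} := HB.pack f (GRing.isZmodMorphism.Build U V f fA).

Record zmod_subgroup (V : zmodType) (K : V -> Prop) : Prop := ZmodSubgroup {
  subgroup0 : K 0;
  subgroupB : forall x y, K x -> K y -> K (x - y) }.

Section ZmodQuotient.
Variables (V : zmodType) (K : V -> Prop) (sK : zmod_subgroup K).

Lemma subgroupN x : K x -> K (- x).
Proof. by move=> Kx; rewrite -sub0r; apply: subgroupB (subgroup0 sK) Kx. Qed.

Lemma subgroupD x y : K x -> K y -> K (x + y).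
Proof. by move=> Kx Ky; rewrite -[y]opprK; apply: subgroupB Kx (subgroupN Ky). Qed.

Lemma subgroup_sym x y : K (x - y) -> K (y - x).
Proof. by move=> /subgroupN; rewrite opprB. Qed.

Lemma subgroup_trans x y z : K (x - y) -> K (y - z) -> K (x - z).
Proof. by move=> Kxy Kyz; have := subgroupD Kxy Kyz; rewrite addrA subrK. Qed.

Lemma quot_repr_subproof v : exists w, `[< K (v - w) >].
Proof. by exists v; apply/asboolP; rewrite subrr; apply: subgroup0 sK. Qed.

(* Depends only on the coset of v, so canonical representatives model the quotient. *)
Definition quot_repr v := xchoose (quot_repr_subproof v).

Lemma quot_reprP v : K (quot_repr v - v).
Proof. exact/subgroup_sym/asboolP/(xchooseP (quot_repr_subproof v)). Qed.

Lemma eq_quot_repr v w : K (v - w) -> quot_repr v = quot_repr w.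
Proof.
move=> Kvw; apply: eq_xchoose => u; apply/asboolP/asboolP => Kv.
  exact: subgroup_trans (subgroup_sym Kvw) Kv.
exact: subgroup_trans Kvw Kv.
Qed.

Lemma quot_reprK v : quot_repr (quot_repr v) = quot_repr v.
Proof. exact/eq_quot_repr/quot_reprP. Qed.

Record zquot := ZQuot { zquot_val : V; _ : quot_repr zquot_val == zquot_val }.
HB.instance Definition _ := [isSub for zquot_val].
HB.instance Definition _ := [Choice of zquot by <:].

Definition zpi v : zquot := @ZQuot (quot_repr v) (introT eqP (quot_reprK v)).

Lemma zpi_val q : zpi (zquot_val q) = q.
Proof. by case: q => v vE; apply: val_inj; exact: (eqP vE). Qed.

Lemma zquot_ind (P : zquot -> Prop) : (forall v, P (zpi v)) -> forall q, P q.
Proof. by move=> Pv q; rewrite -(zpi_val q). Qed.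

Lemma zpi_eqE v w : zpi v = zpi w <-> K (v - w).
Proof.
split=> [/(congr1 zquot_val) /= vw | Kvw]; last exact/val_inj/eq_quot_repr.
have := subgroup_sym (quot_reprP v); rewrite vw => Kv.
exact: subgroup_trans Kv (quot_reprP w).
Qed.

Definition zquot_add (p q : zquot) := zpi (zquot_val p + zquot_val q).
Definition zquot_opp (q : zquot) := zpi (- zquot_val q).

Lemma zquot_addE v w : zquot_add (zpi v) (zpi w) = zpi (v + w).
Proof.
apply/zpi_eqE; rewrite opprD addrACA.
by apply: subgroupD; apply: quot_reprP.
Qed.

Lemma zquot_oppE v : zquot_opp (zpi v) = zpi (- v).
Proof. by apply/zpi_eqE; rewrite -opprD; apply/subgroupN/quot_reprP. Qed.

Lemma zquot_addA : associative zquot_add.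
Proof.
by elim/zquot_ind => u; elim/zquot_ind => v; elim/zquot_ind => w;
  rewrite !zquot_addE addrA.
Qed.

Lemma zquot_addC : commutative zquot_add.
Proof. by elim/zquot_ind => u; elim/zquot_ind => v; rewrite !zquot_addE addrC. Qed.

Lemma zquot_add0 : left_id (zpi 0) zquot_add.
Proof. by elim/zquot_ind => v; rewrite zquot_addE add0r. Qed.

Lemma zquot_addN : left_inverse (zpi 0) zquot_opp zquot_add.
Proof. by elim/zquot_ind => v; rewrite zquot_oppE zquot_addE addNr. Qed.

HB.instance Definition _ :=
  GRing.isZmodule.Build zquot zquot_addA zquot_addC zquot_add0 zquot_addN.

Lemma zpi_is_additive : zmod_morphism zpi.
Proof. by move=> v w; rewrite -zquot_addE -zquot_oppE. Qed.

HB.instance Definition _ := GRing.isZmodMorphism.Build V zquot zpi zpi_is_additive.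

Lemma zpi0E v : zpi v = 0 <-> K v.
Proof. by rewrite -(raddf0 zpi) zpi_eqE subr0. Qed.

Section Lift.
Variables (W : zmodType) (phi : {additive V -> W}).

Definition zquot_lift of (forall v, K v -> phi v = 0) := fun q => phi (zquot_val q).
Hypothesis phiK : forall v, K v -> phi v = 0.

Lemma zquot_liftE v : zquot_lift phiK (zpi v) = phi v.
Proof. by apply/eqP; rewrite -subr_eq0 -raddfB phiK //; apply: quot_reprP. Qed.

Lemma zquot_lift_is_additive : zmod_morphism (zquot_lift phiK).
Proof.
by elim/zquot_ind => v; elim/zquot_ind => w; rewrite -raddfB !zquot_liftE raddfB.
Qed.

HB.instance Definition _ :=
  GRing.isZmodMorphism.Build zquot W (zquot_lift phiK) zquot_lift_is_additive.

End Lift.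
End ZmodQuotient.

Section LmodQuotient.
Variables (S : pzRingType) (V : lmodType S) (K : V -> Prop) (sK : zmod_subgroup K).

Definition lquot of (forall a v, K v -> K (a *: v)) := zquot sK.
Hypothesis KZ : forall a v, K v -> K (a *: v).
Local Notation Q := (lquot KZ).
HB.instance Definition _ := GRing.Zmodule.on Q.

Definition lpi (v : V) : Q := zpi sK v.
Definition lquot_scale a (q : Q) : Q := lpi (a *: zquot_val q).

Lemma lquot_scaleE a v : lquot_scale a (lpi v) = lpi (a *: v).
Proof. by apply/zpi_eqE; rewrite -scalerBr; apply: KZ; apply: quot_reprP. Qed.

Lemma lquot_ind (P : Q -> Prop) : (forall v, P (lpi v)) -> forall q, P q.
Proof. exact: zquot_ind. Qed.

Lemma lpiD v w : lpi v + lpi w = lpi (v + w).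
Proof. exact: (esym (raddfD (zpi sK) v w)). Qed.

Lemma lquot_scaleA a b q : lquot_scale a (lquot_scale b q) = lquot_scale (a * b) q.
Proof. by elim/lquot_ind: q => v; rewrite !lquot_scaleE scalerA. Qed.

Lemma lquot_scale1 : left_id 1 lquot_scale.
Proof. by elim/lquot_ind => v; rewrite lquot_scaleE scale1r. Qed.

Lemma lquot_scaleDr : right_distributive lquot_scale +%R.
Proof.
move=> a; elim/lquot_ind => v; elim/lquot_ind => w.
by rewrite lpiD !lquot_scaleE lpiD scalerDr.
Qed.

Lemma lquot_scaleDl q : {morph lquot_scale^~ q : a b / a + b}.
Proof. by move=> a b; elim/lquot_ind: q => v; rewrite !lquot_scaleE lpiD scalerDl. Qed.

HB.instance Definition _ := GRing.Zmodule_isLmodule.Build S Q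
  lquot_scaleA lquot_scale1 lquot_scaleDr lquot_scaleDl.

Lemma lpi_is_linear : linear lpi.
Proof. by move=> a v w; rewrite -lpiD; congr (_ + _); rewrite -lquot_scaleE. Qed.

HB.instance Definition _ := GRing.isLinear.Build S V Q *:%R lpi lpi_is_linear.

Lemma lpi0E v : lpi v = 0 <-> K v.
Proof. exact: zpi0E. Qed.

End LmodQuotient.

Section DependentProduct.
Variables (S : pzRingType) (I : Type) (Mi : I -> lmodType S).

Definition dfun := forall i, Mi i.
HB.instance Definition _ := gen_eqMixin dfun.
HB.instance Definition _ := gen_choiceMixin dfun.

Definition dfun_add (u v : dfun) : dfun := fun i => u i + v i.
Definition dfun_opp (u : dfun) : dfun := fun i => - u i.
Definition dfun_scale a (u : dfun) : dfun := fun i => a *: u i.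

Lemma dfunP (u v : dfun) : (forall i, u i = v i) -> u = v.
Proof. exact: functional_extensionality_dep. Qed.

Lemma dfun_addA : associative dfun_add.
Proof. by move=> u v w; apply: dfunP => i; apply: addrA. Qed.
Lemma dfun_addC : commutative dfun_add.
Proof. by move=> u v; apply: dfunP => i; apply: addrC. Qed.
Lemma dfun_add0 : left_id (fun i => 0) dfun_add.
Proof. by move=> u; apply: dfunP => i; apply: add0r. Qed.
Lemma dfun_addN : left_inverse (fun i => 0) dfun_opp dfun_add.
Proof. by move=> u; apply: dfunP => i; apply: addNr. Qed.
HB.instance Definition _ :=
  GRing.isZmodule.Build dfun dfun_addA dfun_addC dfun_add0 dfun_addN.

Lemma dfun_scaleA a b u : dfun_scale a (dfun_scale b u) = dfun_scale (a * b) u.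
Proof. by apply: dfunP => i; apply: scalerA. Qed.
Lemma dfun_scale1 : left_id 1 dfun_scale.
Proof. by move=> u; apply: dfunP => i; apply: scale1r. Qed.
Lemma dfun_scaleDr : right_distributive dfun_scale +%R.
Proof. by move=> a u v; apply: dfunP => i; apply: scalerDr. Qed.
Lemma dfun_scaleDl u : {morph dfun_scale^~ u : a b / a + b}.
Proof. by move=> a b; apply: dfunP => i; apply: scalerDl. Qed.
HB.instance Definition _ := GRing.Zmodule_isLmodule.Build S dfun
  dfun_scaleA dfun_scale1 dfun_scaleDr dfun_scaleDl.

Lemma dfun_sumE (J : Type) (r : seq J) (F : J -> dfun) i :
  (\sum_(j <- r) F j) i = \sum_(j <- r) F j i.
Proof. by elim: r => [|j r IH]; rewrite ?big_nil ?big_cons //= -IH. Qed.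

End DependentProduct.

Definition mxcomb (R : pzRingType) (M : lmodType R) a b (A : 'M[R]_(a, b))
    (y : 'I_b -> M) (j : 'I_a) : M :=
  \sum_(l < b) A j l *: y l.

Section Combinations.
Variables (R : pzRingType) (M : lmodType R) (a b : nat) (A : 'M[R]_(a, b)).
Implicit Types (y z : 'I_b -> M) (j : 'I_a).

Lemma mxcomb0 j : mxcomb A (fun=> 0 : M) j = 0.
Proof. by rewrite /mxcomb big1 // => l _; rewrite scaler0. Qed.

Lemma mxcombD y z j : mxcomb A (fun l => y l + z l) j = mxcomb A y j + mxcomb A z j.
Proof. by rewrite /mxcomb -big_split; apply: eq_bigr => l _; rewrite scalerDr. Qed.

Lemma mxcombB y z j : mxcomb A (fun l => y l - z l) j = mxcomb A y j - mxcomb A z j.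
Proof. by rewrite /mxcomb -sumrB; apply: eq_bigr => l _; rewrite scalerBr. Qed.

Lemma mxcomb_mul c (B : 'M[R]_(b, c)) (y : 'I_c -> M) j :
  mxcomb A (mxcomb B y) j = mxcomb (A *m B) y j.
Proof.
rewrite /mxcomb; under eq_bigr do rewrite scaler_sumr.
rewrite exchange_big; apply: eq_bigr => m _; rewrite mxE scaler_suml.
by apply: eq_bigr => l _; rewrite scalerA.
Qed.

Lemma mxcomb_mulmx0 c (B : 'M[R]_(b, c)) (y : 'I_c -> M) j :
  A *m B = 0 -> mxcomb A (mxcomb B y) j = 0.
Proof.
by move=> AB0; rewrite mxcomb_mul AB0 /mxcomb big1 // => m _; rewrite mxE scale0r.
Qed.

Lemma linear_mxcomb (N : lmodType R) (f : {linear M -> N}) y j :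
  f (mxcomb A y j) = mxcomb A (fun l => f (y l)) j.
Proof. by rewrite linear_sum; apply: eq_bigr => l _; rewrite linearZ_LR. Qed.

End Combinations.

Lemma Tor1_vanishesE (R : pzRingType) (k : nat -> nat)
    (d : forall i, 'M[R]_(k i, k i.+1)) (M : lmodType R) :
  Tor1_vanishes d M <->
  forall x : 'I_(k 1) -> M, (forall j, mxcomb (d 0) x j = 0) ->
    exists y, forall l, x l = mxcomb (d 1) y l.
Proof. by []. Qed.

Lemma Tor1_vanishes_ext (R : pzRingType) (k : nat -> nat)
    (d : forall i, 'M[R]_(k i, k i.+1)) (A B C : lmodType R)
    (f : {linear A -> B}) (g : {linear B -> C}) :
  d 0 *m d 1 = 0 -> short_exact f g ->
  Tor1_vanishes d A -> Tor1_vanishes d C -> Tor1_vanishes d B.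
Proof.
move=> dd0 [f_inj g_surj g_ker] /Tor1_vanishesE TA /Tor1_vanishesE TC.
apply/Tor1_vanishesE => x dx0.
have [z gxE] : exists z, forall l, g (x l) = mxcomb (d 1) z l.
  by apply: TC => j; rewrite -linear_mxcomb dx0 linear0.
have [z' /funext gz'E] := choice (fun m => g_surj (z m)).
pose x' l := x l - mxcomb (d 1) z' l.
have gx'0 l : g (x' l) = 0 by rewrite linearB linear_mxcomb gxE gz'E subrr.
have [a faE] := choice (fun l => (g_ker (x' l)).1 (gx'0 l)).
have [y ayE] : exists y, forall l, a l = mxcomb (d 1) y l.
  apply: TA => j; apply: f_inj.
  by rewrite linear0 linear_mxcomb (funext faE) mxcombB dx0 mxcomb_mulmx0 // subrr.
exists (fun m => z' m + f (y m)) => l.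
by rewrite mxcombD -linear_mxcomb -ayE faE subrKC.
Qed.

Section DirectLimit.
Variables (R : pzRingType) (I : Type) (le : I -> I -> Prop) (Mi : I -> lmodType R)
  (f : forall i j, {linear Mi i -> Mi j}) (M : lmodType R)
  (g : forall i, {linear Mi i -> M}).
Hypotheses (fS : direct_system le f) (gL : is_direct_limit le f g).

Let le_refl i : le i i. Proof. by case: fS => -[]. Qed.
Let le_trans i j l : le i j -> le j l -> le i l.
Proof. by case: fS => -[_ trans _ _ _] _; apply: trans. Qed.
Let I_inhabited : inhabited I. Proof. by case: fS => -[]. Qed.
Let le_directed i j : exists l, le i l /\ le j l.
Proof. by case: fS => -[_ _ _ directed _] _; apply: directed. Qed.
Let f_comp i j l x : le i j -> le j l -> f j l (f i j x) = f i l x.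
Proof. by case: fS => _; apply. Qed.
Let g_cocone i j x : le i j -> g j (f i j x) = g i x.
Proof. by case: gL => gC _; apply: gC. Qed.

Lemma directed_ub_nat (i0 : I) (m : nat) (phi : nat -> I) :
  exists u, le i0 u /\ forall t, (t < m)%N -> le (phi t) u.
Proof.
elim: m => [|m [u [i0u phiu]]]; first by exists i0; split.
have [u' [uu' phiu']] := le_directed u (phi m).
exists u'; split=> [|t]; first exact: le_trans i0u uu'.
rewrite ltnS leq_eqVlt => /predU1P[-> //|/phiu phitu].
exact: le_trans phitu uu'.
Qed.

Lemma directed_ub (i0 : I) (m : nat) (phi : 'I_m -> I) :
  exists u, le i0 u /\ forall t, le (phi t) u.
Proof.
have [u [i0u phiu]] := directed_ub_nat i0 m (fun t => odflt i0 (omap phi (insub t))).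
by exists u; split=> // t; have := phiu _ (ltn_ord t); rewrite valK.
Qed.

Lemma direct_limit_ext (N : lmodType R) (v w : {linear M -> N}) :
  (forall i x, v (g i x) = w (g i x)) -> forall y, v y = w y.
Proof.
move=> vw y.
have [u [_ uU]] := gL.2 N (fun i => v \o g i) (fun i j x ij => congr1 v (g_cocone x ij)).
by rewrite (uU v) ?(uU w) // => i x /=; rewrite vw.
Qed.

Definition limit_image (y : M) := exists i x, g i x = y.

Lemma limit_image_subgroup : zmod_subgroup limit_image.
Proof.
have [i0] := I_inhabited; split; first by exists i0, 0; rewrite linear0.
move=> _ _ [i [x <-]] [j [y <-]]; have [l [il jl]] := le_directed i j.
by exists l, (f i l x - f j l y); rewrite linearB !g_cocone.
Qed.

Lemma limit_imageZ a y : limit_image y -> limit_image (a *: y).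
Proof. by move=> [i [x <-]]; exists i, (a *: x); rewrite linearZ_LR. Qed.

Lemma direct_limit_surj y : exists i x, g i x = y.
Proof.
have := direct_limit_ext (v := lpi limit_image_subgroup limit_imageZ) (w := \0).
by move=> /(_ _ y) /lpi0E; apply=> i x /=; apply/lpi0E; exists i, x.
Qed.

Definition eventually_zero (v : dfun Mi) := exists l, forall j, le l j -> v j = 0.

Lemma eventually_zero_subgroup : zmod_subgroup eventually_zero.
Proof.
have [i0] := I_inhabited; split; first by exists i0.
move=> v w [l1 v0] [l2 w0]; have [l [l1l l2l]] := le_directed l1 l2.
exists l => j lj; change (v j - w j = 0).
by rewrite v0 ?w0 ?subr0 //; apply: le_trans lj.
Qed.

Lemma eventually_zeroZ a v : eventually_zero v -> eventually_zero (a *: v).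
Proof. by move=> [l v0]; exists l => j lj; change (a *: v j = 0); rewrite v0 // scaler0. Qed.

(* Only the class of [thread x] modulo [eventually_zero] matters, so its values at the
   indices not above i are irrelevant. *)
Definition thread i (x : Mi i) : dfun Mi :=
  fun j => if `[< le i j >] then f i j x else 0.

Lemma thread_is_linear i : linear (@thread i).
Proof.
move=> a x y; apply: dfunP => j.
change (thread (a *: x + y) j = a *: thread x j + thread y j); rewrite /thread.
by case: ifP => _; rewrite ?linearP ?scaler0 ?addr0.
Qed.

HB.instance Definition _ i :=
  GRing.isLinear.Build R (Mi i) (dfun Mi) *:%R (@thread i) (@thread_is_linear i).

Definition germ i : {linear Mi i -> lquot eventually_zero_subgroup eventually_zeroZ} :=
  lpi eventually_zero_subgroup eventually_zeroZ \o @thread i.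

Lemma germ_cocone : cocone le f germ.
Proof.
move=> i j x ij; apply/zpi_eqE; exists j => m jm.
have im := le_trans ij jm.
change (thread (f i j x) m - thread x m = 0).
by rewrite /thread (asboolT jm) (asboolT im) f_comp // subrr.
Qed.

Lemma direct_limit_ker i x : g i x = 0 -> exists j, le i j /\ f i j x = 0.
Proof.
move=> gx0; have [u [ugE _]] := gL.2 _ germ germ_cocone.
have /lpi0E[l thread0] : germ i x = 0 by rewrite -ugE gx0 linear0.
have [j [ij lj]] := le_directed i l.
by exists j; split=> //; have := thread0 j lj; rewrite /= /thread (asboolT ij).
Qed.

Lemma Tor1_vanishes_direct_limit (k : nat -> nat) (d : forall i, 'M[R]_(k i, k i.+1)) :
  (forall i, Tor1_vanishes d (Mi i)) -> Tor1_vanishes d M.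
Proof.
move=> TM; apply/Tor1_vanishesE => x dx0.
have lift_x l : exists p : {i : I & Mi i}, g (tag p) (tagged p) = x l.
  by have [i [x' <-]] := direct_limit_surj (x l); exists (Tagged Mi x').
have [ix ixE] := choice lift_x.
have [i0] := I_inhabited.
have [i [_ ixi]] := directed_ub i0 (fun l => tag (ix l)).
pose z l := f (tag (ix l)) i (tagged (ix l)).
have gzE l : g i (z l) = x l by rewrite g_cocone // ixE.
have dz_dies j : exists m, le i m /\ f i m (mxcomb (d 0) z j) = 0.
  by apply: direct_limit_ker; rewrite linear_mxcomb (funext gzE) dx0.
have [m mE] := choice dz_dies.
have [i' [ii' mi']] := directed_ub i m.
have /Tor1_vanishesE Ti' := TM i'.
have [y zyE] : exists y, forall l, f i i' (z l) = mxcomb (d 1) y l.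
  apply: Ti' => j; have [im dz0] := mE j.
  by rewrite -linear_mxcomb -(f_comp _ im (mi' j)) dz0 linear0.
exists (fun l => g i' (y l)) => l.
by rewrite -gzE -(g_cocone _ ii') zyE linear_mxcomb.
Qed.

End DirectLimit.

Section ScaleMap.
Variables (R : pzRingType) (V : lmodType R).

Definition scalev (v : V) (r : R^o) : V := (r : R) *: v.

Lemma scalev_is_linear v : linear (scalev v).
Proof. by move=> a r s; rewrite /scalev scalerDl scalerA. Qed.

HB.instance Definition _ v :=
  GRing.isLinear.Build R R^o V *:%R (scalev v) (scalev_is_linear v).

End ScaleMap.

Section Product.
Variables (R : pzRingType) (I : Type) (Mi : I -> lmodType R) (P : lmodType R)
  (p : forall i, {linear P -> Mi i}).
Hypothesis pP : is_product p.

(* Test the universal property against the maps r |-> r *: z from R. *)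
Lemma product_ext z1 z2 : (forall i, p i z1 = p i z2) -> z1 = z2.
Proof.
move=> pz; have [u [_ uU]] := pP (fun i => scalev (p i z1)).
have uE z : (forall i, p i z = p i z1) -> z = u 1.
  move=> pzE; rewrite -[z]scale1r; apply: (uU (scalev z)) => i r.
  by rewrite /scalev linearZ_LR pzE.
by rewrite (uE z1) // (uE z2) // => i; rewrite pz.
Qed.

Lemma product_tuple (y : forall i, Mi i) : exists z, forall i, p i z = y i.
Proof.
have [u [uE _]] := pP (fun i => scalev (y i)).
by exists (u 1) => i; rewrite uE; apply: scale1r.
Qed.

Lemma Tor1_vanishes_product (k : nat -> nat) (d : forall i, 'M[R]_(k i, k i.+1)) :
  (forall i, Tor1_vanishes d (Mi i)) -> Tor1_vanishes d P.
Proof.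
move=> TM; apply/Tor1_vanishesE => x dx0.
have Y_ex i : exists y : 'I_(k 2) -> Mi i, forall l, p i (x l) = mxcomb (d 1) y l.
  by have /Tor1_vanishesE := TM i; apply=> j; rewrite -linear_mxcomb dx0 linear0.
pose Y i := sval (cid (Y_ex i)).
have [z zE] := choice (fun m => product_tuple (fun i => Y i m)).
exists z => l; apply: product_ext => i.
by rewrite linear_mxcomb (funext (zE^~ i)); apply: (svalP (cid (Y_ex i))).
Qed.

End Product.

Section BalancedMaps.
Variables (R : pzRingType) (F : rmodType R) (N : lmodType R) (T : zmodType)
  (b : F -> N -> T).
Hypothesis bB : balanced b.

Lemma balanced_additivel y : zmod_morphism (b^~ y).
Proof. by case: bB => bD _ _ x1 x2; apply/eqP; rewrite eq_sym subr_eq -bD subrK. Qed.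

Lemma balanced_additiver x : zmod_morphism (b x).
Proof. by case: bB => _ bD _ y1 y2; apply/eqP; rewrite eq_sym subr_eq -bD subrK. Qed.

Lemma balanced0l y : b 0 y = 0.
Proof. exact: (raddf0 (additive_of (balanced_additivel y))). Qed.

Lemma balancedBr x y1 y2 : b x (y1 - y2) = b x y1 - b x y2.
Proof. exact: (raddfB (additive_of (balanced_additiver x))). Qed.

Lemma balanced_suml (J : Type) (r : seq J) (X : J -> F) y :
  b (\sum_(j <- r) X j) y = \sum_(j <- r) b (X j) y.
Proof. exact: (raddf_sum (additive_of (balanced_additivel y))). Qed.

Lemma balanced_sumr (J : Type) (r : seq J) x (Y : J -> N) :
  b x (\sum_(j <- r) Y j) = \sum_(j <- r) b x (Y j).
Proof. exact: (raddf_sum (additive_of (balanced_additiver x))). Qed.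

End BalancedMaps.

Section PureSolvability.
Variables (R : pzRingType) (a b : nat) (A : 'M[R]_(a, b)).

(* The right module presented by A is the quotient of the column vectors R^a by
   the right submodule A R^b; its tensor product with N is N^a / A N^b. *)
Definition col_image (c : 'cV[R^c]_a) :=
  exists r : 'I_b -> R, forall j, (c j 0 : R) = \sum_l A j l * r l.

Lemma col_image_subgroup : zmod_subgroup col_image.
Proof.
split; first by exists (fun=> 0) => j; rewrite mxE big1 // => l _; rewrite mulr0.
move=> c1 c2 [r1 c1E] [r2 c2E]; exists (fun l => r1 l - r2 l) => j.
by rewrite !mxE c1E c2E -sumrB; apply: eq_bigr => l _; rewrite mulrBr.
Qed.

Lemma col_imageZ s c : col_image c -> col_image (s *: c).
Proof.
move=> [r cE]; exists (fun l => r l * s) => j.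
have -> : ((s *: c) j 0 : R) = (c j 0 : R) * s by rewrite mxE.
by rewrite cE mulr_suml; apply: eq_bigr => l _; rewrite mulrA.
Qed.

Definition presented : rmodType R := lquot col_image_subgroup col_imageZ.

Local Notation ppi := (lpi col_image_subgroup col_imageZ).

Definition presented_gen j : presented := ppi (delta_mx j 0).

Lemma presented_gen_sum (c : 'cV[R^c]_a) :
  \sum_j ((c j 0 : R) : R^c) *: presented_gen j = ppi c.
Proof.
rewrite [in RHS](matrix_sum_delta c) linear_sum.
by apply: eq_bigr => j _; rewrite big_ord1 linearZ.
Qed.

Lemma presented_col_mx l : ppi (\col_j (A j l : R^c)) = 0.
Proof.
apply/lpi0E; exists (fun m => (m == l)%:R) => j; rewrite mxE (bigD1 l) //= eqxx.
by rewrite mulr1 big1 ?addr0 // => m /negPf ->; rewrite mulr0.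
Qed.

Section Tensor.
Variable N : lmodType R.

Definition row_image (v : dfun (fun _ : 'I_a => N)) :=
  exists w : 'I_b -> N, forall j, v j = mxcomb A w j.

Lemma row_image_subgroup : zmod_subgroup row_image.
Proof.
split; first by exists (fun=> 0) => j; rewrite mxcomb0.
by move=> v1 v2 [w1 v1E] [w2 v2E]; exists (fun l => w1 l - w2 l) => j;
  rewrite mxcombB -v1E -v2E.
Qed.

Definition tensor := zquot row_image_subgroup.
Local Notation tpi := (zpi row_image_subgroup).

Definition tens_col (y : N) (c : 'cV[R^c]_a) : tensor :=
  tpi (fun j => (c j 0 : R) *: y).

Lemma tens_col_is_additive y : zmod_morphism (tens_col y).
Proof.
move=> c1 c2; rewrite -raddfB; congr zpi; apply: dfunP => j.
by rewrite !mxE scalerBl.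
Qed.

HB.instance Definition _ y :=
  GRing.isZmodMorphism.Build _ _ (tens_col y) (tens_col_is_additive y).

Lemma tens_col_image y c : col_image c -> tens_col y c = 0.
Proof.
move=> [r cE]; apply/zpi0E; exists (fun l => r l *: y) => j.
by rewrite cE scaler_suml; apply: eq_bigr => l _; rewrite scalerA.
Qed.

Definition tens (x : presented) (y : N) : tensor := zquot_lift (tens_col_image y) x.

Lemma tens_lpi c y : tens (ppi c) y = tens_col y c.
Proof. exact: zquot_liftE. Qed.

Lemma tens_balanced : balanced tens.
Proof.
split=> [x1 x2 y | x y1 y2 | x r y]; first exact: raddfD.
  elim/lquot_ind: x => c; rewrite !tens_lpi /tens_col -raddfD; congr zpi.
  by apply: dfunP => j; apply: scalerDr.
elim/lquot_ind: x => c; rewrite -linearZ !tens_lpi; congr zpi.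
by apply: dfunP => j; rewrite mxE scalerA.
Qed.

Lemma tens_gen j y : tens (presented_gen j) y = tpi (fun i => (i == j)%:R *: y).
Proof. by rewrite tens_lpi; congr zpi; apply: dfunP => i; rewrite mxE eqxx andbT. Qed.

Lemma tens_is_tensor : is_tensor tens.
Proof.
split; first exact: tens_balanced.
move=> T' b' b'B.
pose u0 (v : dfun (fun _ : 'I_a => N)) := \sum_j b' (presented_gen j) (v j).
have u0_additive : zmod_morphism u0.
  by move=> v w; rewrite /u0 -sumrB; apply: eq_bigr => j _; apply: balancedBr.
have u0_b' (c : 'cV[R^c]_a) y : u0 (fun j => (c j 0 : R) *: y) = b' (ppi c) y.
  rewrite -presented_gen_sum balanced_suml //; apply: eq_bigr => j _.
  by case: b'B => _ _ ->.
have u0K v : row_image v -> additive_of u0_additive v = 0.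
  move=> [w vE]; rewrite /= /u0 (eq_bigr _ (fun j _ => congr1 _ (vE j))).
  under eq_bigr do rewrite balanced_sumr //.
  rewrite exchange_big big1 //= => l _.
  have := u0_b' (\col_j (A j l : R^c)) (w l).
  rewrite presented_col_mx balanced0l // => u0_col0.
  by rewrite -[RHS]u0_col0; apply: eq_bigr => j _; rewrite mxE.
exists (zquot_lift u0K); split=> [x y | v vE t].
  elim/lquot_ind: x => c; rewrite tens_lpi; apply: eq_trans (u0_b' c y).
  exact: zquot_liftE.
elim/zquot_ind: t => v0; apply: (@eq_trans _ _ (u0 v0)); last exact/esym/zquot_liftE.
have -> : tpi v0 = \sum_j tens (presented_gen j) (v0 j).
  under eq_bigr do rewrite tens_gen.
  rewrite -raddf_sum; congr zpi; apply: dfunP => i; rewrite dfun_sumE.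
  rewrite (bigD1 i) //= eqxx scale1r big1 ?addr0 // => j /negPf ji.
  by rewrite eq_sym ji scale0r.
by rewrite raddf_sum; apply: eq_bigr => j _; apply: vE.
Qed.

End Tensor.

Local Notation tpi N := (zpi (@row_image_subgroup N)).

Lemma pure_solvable (N M : lmodType R) (f : {linear N -> M}) :
  pure_map f -> forall (z : 'I_a -> N) (w : 'I_b -> M),
  (forall j, f (z j) = mxcomb A w j) -> exists w', forall j, z j = mxcomb A w' j.
Proof.
move=> fP z w zE.
pose fa (v : dfun (fun _ : 'I_a => N)) : tensor M := tpi M (fun j => f (v j)).
have fa_additive : zmod_morphism fa.
  by move=> v1 v2; rewrite -raddfB; congr zpi; apply: dfunP => j; apply: linearB.
have faK v : row_image v -> additive_of fa_additive v = 0.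
  move=> [w0 vE]; apply/zpi0E; exists (fun l => f (w0 l)) => j.
  by rewrite vE linear_mxcomb.
(* u is the tensor product of f with the right module presented by A. *)
pose u : {additive tensor N -> tensor M} := zquot_lift faK.
have uE x y : u (tens x y) = tens x (f y).
  elim/lquot_ind: x => c; rewrite !tens_lpi; apply: eq_trans; first exact: zquot_liftE.
  by congr zpi; apply: dfunP => j; apply: linearZ_LR.
have u_inj := fP _ _ _ _ _ (tens_is_tensor N) (tens_is_tensor M) u uE.
have /u_inj/zpi_eqE : u (tpi N z) = u 0.
  by rewrite raddf0; apply: eq_trans; [exact: zquot_liftE | apply/zpi0E; exists w].
by move=> [w' zE']; exists w' => j; rewrite -[z j]subr0; apply: zE'.
Qed.

End PureSolvability.

Section PureExactSequence.
Variables (R : pzRingType) (N M C : lmodType R) (f : {linear N -> M}) (g : {linear M -> C}).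
Hypotheses (fg : short_exact f g) (fP : pure_map f).
Variables (k : nat -> nat) (d : forall i, 'M[R]_(k i, k i.+1)).
Hypothesis TM : Tor1_vanishes d M.

Lemma Tor1_vanishes_pure_sub : Tor1_vanishes d N.
Proof.
have /Tor1_vanishesE TM' := TM; apply/Tor1_vanishesE => x dx0.
have [y fxE] : exists y, forall l, f (x l) = mxcomb (d 1) y l.
  by apply: TM' => j; rewrite -linear_mxcomb dx0 linear0.
by have [w' xE] := pure_solvable fP fxE; exists w'.
Qed.

Lemma Tor1_vanishes_pure_quot : Tor1_vanishes d C.
Proof.
have /Tor1_vanishesE TM' := TM; apply/Tor1_vanishesE => x dx0.
case: fg => _ g_surj g_ker; have [x' gx'E] := choice (fun l => g_surj (x l)).
have g_dx' j : g (mxcomb (d 0) x' j) = 0.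
  by rewrite linear_mxcomb (funext gx'E) dx0.
have [t ftE] := choice (fun j => (g_ker _).1 (g_dx' j)).
have [w' tE] := pure_solvable fP ftE.
have [y x'E] : exists y, forall l, x' l - f (w' l) = mxcomb (d 1) y l.
  by apply: TM' => j; rewrite mxcombB -linear_mxcomb -tE ftE subrr.
exists (fun m => g (y m)) => l.
rewrite -linear_mxcomb -x'E linearB ((g_ker _).2 (ex_intro _ (w' l) erefl)).
by rewrite subr0 gx'E.
Qed.

End PureExactSequence.

Theorem proposition3p11 (R : pzRingType) (n : nat) (hn : (1 < n)%N) :
  (forall (A B C : lmodType R) (f : {linear A -> B}) (g : {linear B -> C}),
     short_exact f g -> FPn_flat n A -> FPn_flat n C -> FPn_flat n B) /\
  (forall (I : Type) (le : I -> I -> Prop) (Mi : I -> lmodType R)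
          (f : forall i j, {linear Mi i -> Mi j}) (M : lmodType R)
          (g : forall i, {linear Mi i -> M}),
     direct_system le f -> is_direct_limit le f g ->
     (forall i, FPn_flat n (Mi i)) -> FPn_flat n M) /\
  (forall (I : Type) (Mi : I -> lmodType R) (P : lmodType R)
          (p : forall i, {linear P -> Mi i}),
     is_product p -> (forall i, FPn_flat n (Mi i)) -> FPn_flat n P) /\
  (forall (N M C : lmodType R) (f : {linear N -> M}) (g : {linear M -> C}),
     short_exact f g -> pure_map f -> FPn_flat n M ->
     FPn_flat n N /\ FPn_flat n C).
Proof.
split; [|split; [|split]].
- move=> A B C f g fg FA FC k d dP.
  exact: (Tor1_vanishes_ext (dP 0 hn).1 fg (FA k d dP) (FC k d dP)).
- move=> I le Mi f M g fS gL FM k d dP.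
  exact: (Tor1_vanishes_direct_limit fS gL (fun i => FM i k d dP)).
- move=> I Mi P p pP FM k d dP.
  exact: (Tor1_vanishes_product pP (fun i => FM i k d dP)).
- move=> N M C f g fg fP FM; split=> k d dP.
    exact: (Tor1_vanishes_pure_sub fP (FM k d dP)).
  exact: (Tor1_vanishes_pure_quot fg fP (FM k d dP)).
Qed.
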